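(* Let $\mathrm{M}$ be a matroid on a finite set $E$, let $\mathcal{M}$ be a proper modular cut of its lattice of flats, and let $e\notin E$. If $F$ is a minimal element of $\mathcal{M}$, then $F\sqcup\{e\}$ is an irreducible flat of $\mathrm{M}\cup_{\mathcal{M}}e$.
   Context: Flats are ordered by inclusion, $\hat0$ is the smallest flat. Flats $F,G$ form a modular pair if $\operatorname{rk}(F\vee G)+\operatorname{rk}(F\wedge G)=\operatorname{rk}F+\operatorname{rk}G$. A modular cut is an upward-closed set $\mathcal{M}$ of flats such that $F\wedge G\in\mathcal{M}$ whenever $F,G\in\mathcal{M}$ form a modular pair; it is proper if $\hat0\notin\mathcal{M}$. The single-element extension $\mathrm{M}\cup_{\mathcal{M}}e$ is the matroid on $E\sqcup\{e\}$ with rank function $\operatorname{rk}(S)=\operatorname{rk}_{\mathrm{M}}(S)$ and $\operatorname{rk}(S\sqcup\{e\})=\operatorname{rk}_{\mathrm{M}}(S)$ if $\operatorname{cl}_{\mathrm{M}}(S)\in\mathcal{M}$ and $\operatorname{rk}_{\mathrm{M}}(S)+1$ otherwise ($S\subseteq E$). A flat $H$ is irreducible if the interval $[\hat0,H]$ of the lattice of flats admits only trivial decompositions as a product of intervals $[\hat0,H_1]\times\dots\times[\hat0,H_m]$ (equivalently $H$ is not the disjoint union of two nonempty flats whose ranks add up to $\operatorname{rk}H$). *)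

From mathcomp Require Import all_boot.
Set Implicit Arguments. Unset Strict Implicit. Unset Printing Implicit Defensive.

Section Matroids.
Variable T : finType.
Implicit Types (r : {set T} -> nat) (A B S F G H : {set T}).

Definition is_matroid_rank r : Prop :=
  [/\ forall A, r A <= #|A|,
      forall A B, A \subset B -> r A <= r B &
      forall A B, r (A :|: B) + r (A :&: B) <= r A + r B].

Definition cl r S : {set T} := [set x | r (x |: S) == r S].

Definition flat r F : Prop := forall x, x \notin F -> r F < r (x |: F).

(* bottom flat \hat 0 = cl(emptyset); meet of flats = intersection,
   join of flats = closure of the union *)
Definition bot_flat r : {set T} := cl r set0.
Definition fjoin r F G : {set T} := cl r (F :|: G).

Definition modular_pair r F G : Prop :=
  r (fjoin r F G) + r (F :&: G) = r F + r G.

Definition is_modular_cut r (MC : {set {set T}}) : Prop :=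
  [/\ forall F, F \in MC -> flat r F,
      forall F G, F \in MC -> flat r G -> F \subset G -> G \in MC &
      forall F G, F \in MC -> G \in MC -> modular_pair r F G ->
                  F :&: G \in MC].

Definition proper_modular_cut r (MC : {set {set T}}) : Prop :=
  is_modular_cut r MC /\ bot_flat r \notin MC.

Definition minimal_in (MC : {set {set T}}) F : Prop :=
  F \in MC /\ forall G, G \in MC -> G \subset F -> G = F.

(* A flat H is irreducible if the interval [\hat0, H] of the lattice of
   flats admits no nontrivial product decomposition
   [\hat0,H] ~= [\hat0,H1] x [\hat0,H2] with both factors nontrivial
   (H1, H2 <> \hat0). The isomorphism is an order isomorphism phi from
   pairs of flats (G1,G2), G1 <= H1, G2 <= H2, onto flats G <= H. *)
Definition nontrivial_decomposition r H : Prop :=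
  exists H1 H2 (phi : {set T} -> {set T} -> {set T}),
    [/\ [/\ flat r H1, H1 \subset H, flat r H2 & H2 \subset H],
        H1 <> bot_flat r /\ H2 <> bot_flat r,
        (forall G1 G2, flat r G1 -> G1 \subset H1 -> flat r G2 -> G2 \subset H2 ->
           flat r (phi G1 G2) /\ phi G1 G2 \subset H),
        (forall G, flat r G -> G \subset H -> exists G1 G2,
           [/\ flat r G1, G1 \subset H1, flat r G2, G2 \subset H2 & phi G1 G2 = G]) &
        (forall G1 G2 G1' G2',
           flat r G1 -> G1 \subset H1 -> flat r G2 -> G2 \subset H2 ->
           flat r G1' -> G1' \subset H1 -> flat r G2' -> G2' \subset H2 ->
           (phi G1 G2 \subset phi G1' G2' <-> (G1 \subset G1') /\ (G2 \subset G2')))].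

Definition irreducible_flat r H : Prop :=
  flat r H /\ ~ nontrivial_decomposition r H.

End Matroids.

(* Single-element extension M \cup_MC e on the ground type option T,
   the new element e being None. *)
Definition restrict_some (T : finType) (S : {set option T}) : {set T} :=
  [set x | Some x \in S].

Definition ext_rank (T : finType) (r : {set T} -> nat) (MC : {set {set T}})
    (S : {set option T}) : nat :=
  let S' := restrict_some S in
  if None \in S then (if cl r S' \in MC then r S' else (r S').+1) else r S'.

(* Write e for the new element [None], so the flat in question is F + e.  As F is in the
   cut, e lies in the closure of F; as no flat strictly below F is in the cut, e is a
   coloop of every proper subflat of F + e containing it.  Every element of F + e lies in
   the bottom or in an atom of [0, F + e]: the atom is F + e itself if rk F = 1, and
   otherwise e + loops or the closure of a non-loop of F (e + loops is a flat because, by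
   modularity and the minimality of F, no rank-one flat is then in the cut).  In a
   product decomposition every atom lies on one of the two axes, so the axes cover F + e.
   The two properties of e force the axis through e to be all of F + e, so the other
   factor is trivial. *)

From mathcomp Require Import all_boot zify.
Set Implicit Arguments. Unset Strict Implicit. Unset Printing Implicit Defensive.

Definition interval_atom (X : finType) (rk : {set X} -> nat) (H Q : {set X}) : Prop :=
  [/\ flat rk Q, Q \subset H, Q != bot_flat rk &
      forall K, flat rk K -> K \subset Q -> K = bot_flat rk \/ K = Q].

Definition product_iso (X : finType) (rk : {set X} -> nat) (H H1 H2 : {set X})
    (phi : {set X} -> {set X} -> {set X}) : Prop :=
  [/\ forall G1 G2, flat rk G1 -> G1 \subset H1 -> flat rk G2 -> G2 \subset H2 ->
        flat rk (phi G1 G2) /\ phi G1 G2 \subset H,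
      forall G, flat rk G -> G \subset H -> exists G1 G2,
        [/\ flat rk G1, G1 \subset H1, flat rk G2, G2 \subset H2 & phi G1 G2 = G] &
      forall G1 G2 G1' G2',
        flat rk G1 -> G1 \subset H1 -> flat rk G2 -> G2 \subset H2 ->
        flat rk G1' -> G1' \subset H1 -> flat rk G2' -> G2' \subset H2 ->
        (phi G1 G2 \subset phi G1' G2' <-> (G1 \subset G1') /\ (G2 \subset G2'))].

Lemma product_iso_swap (X : finType) (rk : {set X} -> nat) H H1 H2 phi :
  product_iso rk H H1 H2 phi -> product_iso rk H H2 H1 (fun G2 G1 => phi G1 G2).
Proof.
case=> phi_in phi_onto phi_le; split=> [G2 G1 *|G fG sG|]; first exact: phi_in.
  by have [G1 [G2 [*]]] := phi_onto G fG sG; exists G2, G1.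
move=> G2 G1 G2' G1' f2 s2 f1 s1 f2' s2' f1' s1'.
have := phi_le G1 G2 G1' G2' f1 s1 f2 s2 f1' s1' f2' s2'; tauto.
Qed.

Section ProductDecomposition.
Variables (X : finType) (rk : {set X} -> nat) (H H1 H2 : {set X}).
Variable phi : {set X} -> {set X} -> {set X}.
Local Notation bot := (bot_flat rk).
Hypotheses (flat_bot : flat rk bot) (bot_min : forall K, flat rk K -> bot \subset K).
Hypotheses (flatH : flat rk H) (flatH1 : flat rk H1) (flatH2 : flat rk H2).
Hypothesis iso : product_iso rk H H1 H2 phi.

Let bot1 := bot_min flatH1.
Let bot2 := bot_min flatH2.

Lemma phi_top : phi H1 H2 = H.
Proof.
case: iso => phi_in phi_onto phi_le.
have [G1 [G2 [fG1 sG1 fG2 sG2 eG]]] := phi_onto H flatH (subxx H).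
apply/eqP; rewrite eqEsubset (phi_in _ _ flatH1 _ flatH2 _).2 // -{1}eG.
exact/phi_le.
Qed.

Lemma phi_bot : phi bot bot = bot.
Proof.
case: iso => phi_in phi_onto phi_le.
have [G1 [G2 [fG1 sG1 fG2 sG2 eG]]] := phi_onto bot flat_bot (bot_min flatH).
have [fb _] := phi_in bot bot flat_bot bot1 flat_bot bot2.
apply/eqP; rewrite eqEsubset bot_min // andbT -{3}eG.
by apply/phi_le => //; rewrite !bot_min.
Qed.

Lemma second_axis_top_trivial : phi bot H2 = H -> H1 = bot.
Proof.
case: iso => phi_in phi_onto phi_le eX2.
have : phi H1 H2 \subset phi bot H2 by rewrite phi_top eX2.
by case/phi_le=> // sH1 _; apply/eqP; rewrite eqEsubset sH1 bot1.
Qed.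

(* An atom of the product is an atom of one factor paired with the bottom of the other. *)
Lemma atom_sub_axes Q : interval_atom rk H Q -> Q \subset phi H1 bot \/ Q \subset phi bot H2.
Proof.
case: iso => phi_in phi_onto phi_le [fQ sQ nQ minQ].
have [A1 [A2 [fA1 sA1 fA2 sA2 eQ]]] := phi_onto Q fQ sQ.
have [sA1b | nA1] := boolP (A1 \subset bot).
  by right; rewrite -eQ; apply/phi_le.
have [sA2b | nA2] := boolP (A2 \subset bot).
  by left; rewrite -eQ; apply/phi_le.
have [fA1b _] := phi_in A1 bot fA1 sA1 flat_bot bot2.
have : phi A1 bot \subset Q by rewrite -eQ; apply/phi_le => //; rewrite subxx bot_min.
case/(minQ _ fA1b) => [eb | eA1].
  have : phi A1 bot \subset phi bot bot by rewrite eb phi_bot.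
  by case/phi_le => // sA1b; rewrite sA1b in nA1.
have : phi A1 A2 \subset phi A1 bot by rewrite eA1 eQ.
by case/phi_le => // _ sA2b; rewrite sA2b in nA2.
Qed.

Lemma axes_cover :
    (forall x, x \in H -> x \in bot \/ exists2 Q, interval_atom rk H Q & x \in Q) ->
  H \subset phi H1 bot :|: phi bot H2.
Proof.
case: iso => phi_in _ _ cover; apply/subsetP => x /cover[xb | [Q atomQ xQ]].
  have [fX1 _] := phi_in H1 bot flatH1 (subxx _) flat_bot bot2.
  by rewrite inE (subsetP (bot_min fX1)).
by rewrite inE; case: (atom_sub_axes atomQ) => /subsetP-> //; rewrite orbT.
Qed.

Variable p : X.
Hypothesis p_coloop :
  forall K, flat rk K -> K \subset H -> p \in K -> K != H -> flat rk (K :\ p).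
Hypothesis p_spanned : forall K, flat rk K -> H :\ p \subset K -> p \in K.

(* Unless [phi bot H2 = H], the flat [phi bot H2 :\ p] is some [phi z1 z2].  Then
   [phi H1 z2] contains [H :\ p], hence [p] and all of [H]; so [H2 <= z2] and
   [phi bot H2 <= phi z1 z2], which misses [p]. *)
Lemma point_in_second_axis_trivial :
  H \subset phi H1 bot :|: phi bot H2 -> p \in phi bot H2 -> H1 = bot.
Proof.
case: iso => phi_in phi_onto phi_le cover pX2.
have [fX2 sX2] := phi_in bot H2 flat_bot bot1 flatH2 (subxx _).
have [eX2 | nX2] := eqVneq (phi bot H2) H; first exact: second_axis_top_trivial.
have fZ := p_coloop fX2 sX2 pX2 nX2.
have sZ : phi bot H2 :\ p \subset H by apply: subset_trans (subD1set _ _) sX2.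
have [z1 [z2 [fz1 sz1 fz2 sz2 eZ]]] := phi_onto _ fZ sZ.
have [fW _] := phi_in H1 z2 flatH1 (subxx _) fz2 sz2.
have X1W : phi H1 bot \subset phi H1 z2 by apply/phi_le => //; rewrite subxx bot_min.
have ZW : phi z1 z2 \subset phi H1 z2 by apply/phi_le => //; rewrite subxx.
have HpW : H :\ p \subset phi H1 z2.
  apply/subsetP => x /setD1P[xp xH].
  case/setUP: (subsetP cover x xH) => [/(subsetP X1W) // | xX2].
  by apply: (subsetP ZW); rewrite eZ in_setD1 xp.
have HW : H \subset phi H1 z2.
  apply/subsetP => x xH; have [-> | xp] := eqVneq x p; first exact: p_spanned fW HpW.
  by apply: (subsetP HpW); rewrite in_setD1 xp.
have [_ sH2] : H1 \subset H1 /\ H2 \subset z2 by apply/phi_le => //; rewrite phi_top.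
have : phi bot H2 \subset phi z1 z2 by apply/phi_le => //; rewrite sH2 bot_min.
by rewrite eZ => /subsetP/(_ p pX2); rewrite setD11.
Qed.
End ProductDecomposition.

Theorem irreducible_flat_of_atom_cover (X : finType) (rk : {set X} -> nat) (H : {set X})
    (p : X) :
    flat rk (bot_flat rk) -> (forall K, flat rk K -> bot_flat rk \subset K) ->
    flat rk H -> p \in H ->
    (forall K, flat rk K -> K \subset H -> p \in K -> K != H -> flat rk (K :\ p)) ->
    (forall K, flat rk K -> H :\ p \subset K -> p \in K) ->
    (forall x, x \in H -> x \in bot_flat rk \/ exists2 Q, interval_atom rk H Q & x \in Q) ->
  irreducible_flat rk H.
Proof.
move=> flat_bot bot_min flatH pH p_coloop p_spanned atom_cover; split=> //.
move=> [H1 [H2 [phi [[fH1 _ fH2 _] [nH1 nH2] phi_in phi_onto phi_le]]]].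
have iso : product_iso rk H H1 H2 phi by [].
have cover := axes_cover flat_bot bot_min flatH fH1 fH2 iso atom_cover.
case/setUP: (subsetP cover p pH) => pX.
  have cover' : H \subset phi (bot_flat rk) H2 :|: phi H1 (bot_flat rk) by rewrite setUC.
  have iso' := product_iso_swap iso.
  exact: nH2 (point_in_second_axis_trivial _ _ _ _ _ iso' p_coloop p_spanned cover' pX).
exact: nH1 (point_in_second_axis_trivial _ _ _ _ _ iso p_coloop p_spanned cover pX).
Qed.

Section MatroidRank.
Variables (T : finType) (r : {set T} -> nat).
Hypothesis rk_matroid : is_matroid_rank r.
Implicit Types (x y : T) (A B S G : {set T}).
Local Notation loops := (bot_flat r).

Lemma rank_le_card A : r A <= #|A|. Proof. by case: rk_matroid. Qed.

Lemma rank_mono A B : A \subset B -> r A <= r B.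
Proof. by case: rk_matroid => _ + _; apply. Qed.

Lemma rank_submod A B : r (A :|: B) + r (A :&: B) <= r A + r B.
Proof. by case: rk_matroid. Qed.

Lemma rank_set0 : r set0 = 0.
Proof. by apply/eqP; rewrite -leqn0 -(cards0 T) rank_le_card. Qed.

Lemma rank_setU1 x A : r (x |: A) <= (r A).+1.
Proof.
have := rank_submod [set x] A; have := rank_le_card [set x].
have := rank_mono (sub0set ([set x] :&: A)); rewrite cards1 rank_set0; lia.
Qed.

Lemma sub_cl S : S \subset cl r S.
Proof. by apply/subsetP => x xS; rewrite inE (setUidPr _) // sub1set. Qed.

Lemma rank_setU1_cl x A S : A \subset S -> x \in cl r A -> r (x |: S) = r S.
Proof.
rewrite inE => sAS /eqP rxA; apply/eqP; rewrite eqn_leq [r S <= _]rank_mono ?subsetUr // andbT.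
have := rank_submod (x |: A) S; rewrite -setUA (setUidPr sAS).
have := rank_mono (A := A) (B := (x |: A) :&: S); rewrite subsetI subsetUr sAS.
by rewrite rxA => /(_ isT); lia.
Qed.

Lemma clS S S' : S \subset S' -> cl r S \subset cl r S'.
Proof.
move=> sS; apply/subsetP => x xS; rewrite inE; apply/eqP.
exact: rank_setU1_cl xS.
Qed.

Lemma rank_cl S : r (cl r S) = r S.
Proof.
suff clsS s : {subset s <= cl r S} -> r ([set:: s] :|: S) = r S.
  by rewrite -(setUidPl (sub_cl S)) -[cl r S]set_enum clsS // => x; rewrite mem_enum.
elim: s => [|x s IHs] sub_s; first by rewrite set_nil set0U.
rewrite set_cons -setUA (rank_setU1_cl (A := S)) ?subsetUr ?sub_s ?mem_head //.
by apply: IHs => y ys; apply: sub_s; rewrite inE ys orbT.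
Qed.

Lemma flat_cl S : flat r (cl r S).
Proof.
move=> x xS; rewrite ltn_neqAle rank_mono ?subsetUr // andbT.
apply: contra xS => /eqP eq_r; rewrite inE eqn_leq [r S <= _]rank_mono ?subsetUr // andbT.
by rewrite -(rank_cl S) eq_r rank_mono // setUS // sub_cl.
Qed.

Lemma cl_flat_id G : flat r G -> cl r G = G.
Proof.
move=> fG; apply/eqP; rewrite eqEsubset sub_cl andbT; apply/subsetP => x.
by apply: contraTT => xG; rewrite inE neq_ltn fG ?orbT.
Qed.

Lemma cl_min S G : flat r G -> S \subset G -> cl r S \subset G.
Proof. by move=> fG sSG; rewrite -(cl_flat_id fG) clS. Qed.

Lemma cl_setU1_id x S : x \in cl r S -> cl r (x |: S) = cl r S.
Proof.
move=> xS; apply/eqP; rewrite eqEsubset [cl r S \subset _]clS ?subsetUr // andbT.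
by apply: cl_min; [apply: flat_cl | rewrite subUset sub1set xS sub_cl].
Qed.

Lemma flat_rank_setU1 x G : flat r G -> x \notin G -> r (x |: G) = (r G).+1.
Proof. by move=> fG xG; apply/eqP; rewrite eqn_leq rank_setU1 fG. Qed.

Lemma flat_eq_rank G G' : flat r G -> G \subset G' -> r G' <= r G -> G = G'.
Proof.
move=> fG sGG' rG'; apply/eqP; rewrite eqEsubset sGG'; apply/subsetP => x xG'.
apply: contraTT rG' => xG; rewrite -ltnNge (leq_trans (fG x xG)) // rank_mono //.
by rewrite subUset sub1set xG'.
Qed.

Lemma flatI G G' : flat r G -> flat r G' -> flat r (G :&: G').
Proof.
move=> fG fG'; have cl_I := cl_min fG (subsetIl G G').
have cl_I' := cl_min fG' (subsetIr G G').
move=> x xGG'; rewrite ltn_neqAle rank_mono ?subsetUr // andbT.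
apply: contra xGG' => /eqP eq_r; have clx : x \in cl r (G :&: G') by rewrite inE eq_r.
by rewrite inE (subsetP cl_I) ?(subsetP cl_I').
Qed.

Lemma loops_min G : flat r G -> loops \subset G.
Proof. by move=> fG; apply: cl_min fG (sub0set G). Qed.

Lemma rank_loops : r loops = 0.
Proof. by rewrite rank_cl rank_set0. Qed.

Lemma rank_setU1_loops y : y \notin loops -> r (y |: loops) = 1.
Proof. by move=> yn; rewrite flat_rank_setU1 ?rank_loops //; apply: flat_cl. Qed.

Lemma atom_sub_flat y G : flat r G -> y \in G -> cl r (y |: loops) \subset G.
Proof. by move=> fG yG; rewrite cl_min // subUset sub1set yG loops_min. Qed.

Lemma flat_sub_atom y G : y \notin loops -> flat r G -> G \subset cl r (y |: loops) ->
  G = loops \/ G = cl r (y |: loops).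
Proof.
move=> yn fG sG; have [sGl | /subsetPn[z zG zn]] := boolP (G \subset loops).
  by left; apply/eqP; rewrite eqEsubset sGl loops_min.
right; apply: (flat_eq_rank fG sG).
rewrite rank_cl rank_setU1_loops // -(rank_setU1_loops zn) rank_mono //.
by rewrite subUset sub1set zG (loops_min fG).
Qed.

End MatroidRank.

Section ModularCut.
Variables (T : finType) (r : {set T} -> nat) (MC : {set {set T}}).
Hypotheses (rk_matroid : is_matroid_rank r) (MC_proper : proper_modular_cut r MC).
Implicit Types (y : T) (G F : {set T}).
Local Notation loops := (bot_flat r).

Lemma cut_flat G : G \in MC -> flat r G.
Proof. by case: MC_proper => -[+ _ _] _; apply. Qed.

Lemma cut_up G G' : G \in MC -> flat r G' -> G \subset G' -> G' \in MC.
Proof. by case: MC_proper => -[_ + _] _; apply. Qed.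

Lemma cut_modular G G' : G \in MC -> G' \in MC -> modular_pair r G G' -> G :&: G' \in MC.
Proof. by case: MC_proper => -[_ _ +] _; apply. Qed.

Lemma loops_notin_cut : loops \notin MC.
Proof. by case: MC_proper. Qed.

(* If [y] is outside [F], the flats [F] and [cl (y + loops)] meet in the loops and
   form a modular pair, so the loops would belong to the cut. *)
Lemma minimal_atom_in_cut F y : minimal_in MC F -> y \notin loops ->
  cl r (y |: loops) \in MC -> cl r (y |: loops) = F.
Proof.
move=> [FMC minF] yn PMC; set P := cl r (y |: loops) in PMC *.
have fF := cut_flat FMC; have fP : flat r P by apply: flat_cl.
have yP : y \in P by rewrite (subsetP (sub_cl _ _)) ?setU11.
have rP : r P = 1 by rewrite rank_cl // rank_setU1_loops.
have [yF | yF] := boolP (y \in F).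
  exact: minF PMC (atom_sub_flat rk_matroid fF yF).
have FP : F :&: P = loops.
  have [//| eFP] := flat_sub_atom rk_matroid yn (flatI rk_matroid fF fP) (subsetIr F P).
  by move: yP; rewrite /P -eFP inE (negbTE yF).
case/negP: loops_notin_cut; rewrite -FP; apply: (cut_modular FMC PMC).
rewrite /modular_pair /fjoin rank_cl // FP rank_loops // rP addn0.
apply/eqP; rewrite eqn_leq; apply/andP; split.
  by have := rank_submod rk_matroid F P; rewrite FP rank_loops // rP addn0 addn1.
rewrite addn1 -(flat_rank_setU1 rk_matroid fF yF) rank_mono //.
by rewrite subUset sub1set inE yP orbT subsetUl.
Qed.

End ModularCut.

Section Extension.
Variables (T : finType) (r : {set T} -> nat) (MC : {set {set T}}).
Hypotheses (rk_matroid : is_matroid_rank r) (MC_proper : proper_modular_cut r MC).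
Implicit Types (x : T) (G S : {set T}) (W : {set option T}).
Local Notation E := (ext_rank r MC).
Local Notation loops := (bot_flat r).

Lemma mem_imset_some x S : (Some x \in Some @: S) = (x \in S).
Proof. exact: mem_imset Some_inj. Qed.

Lemma none_notin_imset S : None \notin Some @: S.
Proof. by apply/imsetP => -[]. Qed.

Lemma restrict_some_imset S : restrict_some (Some @: S) = S.
Proof. by apply/setP => x; rewrite inE mem_imset_some. Qed.

Lemma restrict_some_none W : restrict_some (None |: W) = restrict_some W.
Proof. by apply/setP => x; rewrite !inE. Qed.

Lemma option_set_cases W : (exists S, W = Some @: S) \/ (exists S, W = None |: Some @: S).
Proof.
have [nW | nW] := boolP (None \in W); [right | left]; exists (restrict_some W).
  by apply/setP => -[x|]; rewrite !inE ?mem_imset_some ?inE.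
apply/setP => -[x|]; rewrite ?mem_imset_some ?inE //.
by rewrite (negbTE nW) (negbTE (none_notin_imset _)).
Qed.

Lemma ext_rank_some S : E (Some @: S) = r S.
Proof. by rewrite /ext_rank (negbTE (none_notin_imset S)) restrict_some_imset. Qed.

Lemma ext_rank_none S : E (None |: Some @: S) = if cl r S \in MC then r S else (r S).+1.
Proof. by rewrite /ext_rank setU11 restrict_some_none restrict_some_imset. Qed.

Lemma setU1_imset_none x S : Some x |: (None |: Some @: S) = None |: Some @: (x |: S).
Proof. by rewrite setUCA imsetU1. Qed.

Lemma flat_ext_some G : flat r G -> G \notin MC -> flat E (Some @: G).
Proof.
move=> fG nG [x|] xG.
  by rewrite -imsetU1 !ext_rank_some; apply: fG; rewrite -mem_imset_some.
by rewrite ext_rank_none ext_rank_some cl_flat_id // (negbTE nG).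
Qed.

Lemma flat_ext_none_cut G : G \in MC -> flat E (None |: Some @: G).
Proof.
move=> GMC [x|]; rewrite !inE ?mem_imset_some //= => xG.
have fG := cut_flat MC_proper GMC.
rewrite setU1_imset_none !ext_rank_none cl_flat_id // GMC.
by apply: (leq_trans (fG x xG)); case: ifP.
Qed.

Lemma flat_ext_noneP G : flat r G -> G \notin MC ->
  flat E (None |: Some @: G) <-> (forall x, x \notin G -> cl r (x |: G) \notin MC).
Proof.
move=> fG nG; split=> [fE x xG | covers [x|]]; rewrite ?inE ?mem_imset_some //=.
  have := fE (Some x); rewrite !inE mem_imset_some (negbTE xG) setU1_imset_none.
  rewrite !ext_rank_none cl_flat_id // (negbTE nG) flat_rank_setU1 //.
  by case: ifP => // _ /(_ isT); rewrite ltnn.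
move=> xG; rewrite setU1_imset_none !ext_rank_none cl_flat_id // (negbTE nG).
by rewrite (negbTE (covers x xG)) flat_rank_setU1.
Qed.

Lemma flat_ext_none_loopsP :
  flat E (None |: Some @: loops) <-> (forall x, x \notin loops -> cl r (x |: loops) \notin MC).
Proof. exact: flat_ext_noneP (flat_cl rk_matroid (S := set0)) (loops_notin_cut MC_proper). Qed.

Lemma flat_ext_restrict W : flat E W -> flat r (restrict_some W).
Proof.
have [[G ->] | [G ->]] := option_set_cases W => fE x;
  rewrite ?restrict_some_none restrict_some_imset => xG; have := fE (Some x).
  by rewrite mem_imset_some -imsetU1 !ext_rank_some; apply.
rewrite !inE mem_imset_some (negbTE xG) setU1_imset_none !ext_rank_none => /(_ isT) lt_E.
rewrite ltn_neqAle rank_mono ?subsetUr // andbT; apply/eqP => eq_r.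
by move: lt_E; rewrite cl_setU1_id ?inE -?eq_r //; case: ifP; rewrite ltnn.
Qed.

Lemma none_mem_flat_ext W : flat E W -> restrict_some W \in MC -> None \in W.
Proof.
have [[G ->] | [G ->]] := option_set_cases W; last by rewrite setU11.
rewrite restrict_some_imset => fE GMC; have := fE None (none_notin_imset G).
by rewrite ext_rank_none ext_rank_some (cl_flat_id (cut_flat MC_proper GMC)) GMC ltnn.
Qed.

Lemma restrict_someS W W' : W \subset W' -> restrict_some W \subset restrict_some W'.
Proof. by move=> sW; apply/subsetP => x; rewrite !inE => /(subsetP sW). Qed.

Lemma bot_flat_ext : bot_flat E = Some @: loops.
Proof.
apply/setP => -[x|]; rewrite inE -(imset0 Some).
  by rewrite -imsetU1 !ext_rank_some mem_imset_some inE.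
rewrite ext_rank_none ext_rank_some (negbTE (loops_notin_cut MC_proper)).
by rewrite (negbTE (none_notin_imset _)) eqn_leq ltnn.
Qed.

Lemma loops_ext_min W : flat E W -> Some @: loops \subset W.
Proof.
move=> fW; have fG := flat_ext_restrict fW.
apply/subsetP => _ /imsetP[x xl ->].
by have := subsetP (loops_min rk_matroid fG) x xl; rewrite inE.
Qed.

End Extension.

Section MinimalFlat.
Variables (T : finType) (r : {set T} -> nat) (MC : {set {set T}}) (F : {set T}).
Hypotheses (rk_matroid : is_matroid_rank r) (MC_proper : proper_modular_cut r MC).
Hypothesis F_minimal : minimal_in MC F.
Implicit Types (x y : T) (G : {set T}) (K : {set option T}).
Local Notation E := (ext_rank r MC).
Local Notation loops := (bot_flat r).
Local Notation Fe := (None |: Some @: F).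

Let F_cut : F \in MC := F_minimal.1.
Let flatF : flat r F := cut_flat MC_proper F_cut.

Lemma minimal_nonloop : exists2 y, y \in F & y \notin loops.
Proof.
apply/subsetPn; apply: contraNN (loops_notin_cut MC_proper) => sFl.
suff <- : F = loops by [].
by apply/eqP; rewrite eqEsubset sFl loops_min.
Qed.

Lemma flat_ext_Fe : flat E Fe.
Proof. exact: flat_ext_none_cut. Qed.

Lemma Fe_coloop K : flat E K -> K \subset Fe -> None \in K -> K != Fe -> flat E (K :\ None).
Proof.
have [[G ->] | [G ->]] := option_set_cases K; first by rewrite (negbTE (none_notin_imset _)).
move=> fK sK _ nKF; rewrite setU1K ?none_notin_imset //.
have := flat_ext_restrict rk_matroid fK.
rewrite restrict_some_none restrict_some_imset => fG.
apply: flat_ext_some => //; apply: contra nKF => GMC.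
have := restrict_someS sK; rewrite !restrict_some_none !restrict_some_imset => sGF.
by rewrite (F_minimal.2 G GMC sGF).
Qed.

Lemma Fe_spanned K : flat E K -> Fe :\ None \subset K -> None \in K.
Proof.
rewrite setU1K ?none_notin_imset // => fK sFK.
apply: (none_mem_flat_ext MC_proper fK); apply: (cut_up MC_proper F_cut).
  exact: (flat_ext_restrict rk_matroid fK).
by have := restrict_someS sFK; rewrite restrict_some_imset.
Qed.

Lemma atom_notin_cut y : 1 < r F -> y \notin loops -> cl r (y |: loops) \notin MC.
Proof.
move=> rF yn; apply: contraTN rF => PMC.
by rewrite -(minimal_atom_in_cut rk_matroid MC_proper F_minimal yn PMC) rank_cl
  ?rank_setU1_loops.
Qed.

Lemma interval_atom_Fe : r F <= 1 -> interval_atom E Fe Fe.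
Proof.
move=> rF; have [y yF yn] := minimal_nonloop.
have eF : cl r (y |: loops) = F.
  apply: (flat_eq_rank rk_matroid (flat_cl rk_matroid (S := y |: loops))).
    exact: (atom_sub_flat rk_matroid flatF yF).
  by rewrite rank_cl // rank_setU1_loops.
rewrite /interval_atom (bot_flat_ext MC_proper); split.
- exact: flat_ext_Fe.
- exact: subxx.
- by apply: contraTneq (setU11 None (Some @: F)) => ->; apply: none_notin_imset.
move=> K fK sK; have fG := flat_ext_restrict rk_matroid fK.
have := restrict_someS sK; rewrite restrict_some_none restrict_some_imset -eF => sGP.
have [[G eK] | [G eK]] := option_set_cases K; move: fG sGP;
  rewrite eK ?restrict_some_none restrict_some_imset => fG sGP;
  have [eG | eG] := flat_sub_atom rk_matroid yn fG sGP.
- by left; rewrite eG.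
- have := none_mem_flat_ext MC_proper fK; rewrite eK restrict_some_imset eG eF F_cut.
  by rewrite (negbTE (none_notin_imset _)) => /(_ isT).
- move: fK; rewrite eK eG => /(flat_ext_none_loopsP rk_matroid MC_proper)/(_ y yn).
  by rewrite eF F_cut.
- by right; rewrite eG eF.
Qed.

Lemma interval_atom_none_loops : 1 < r F -> interval_atom E Fe (None |: Some @: loops).
Proof.
move=> rF; rewrite /interval_atom (bot_flat_ext MC_proper); split.
- by apply/(flat_ext_none_loopsP rk_matroid MC_proper) => x; apply: atom_notin_cut.
- by rewrite setUS // imsetS // loops_min.
- by apply: contraTneq (setU11 None (Some @: loops)) => ->; apply: none_notin_imset.
move=> K fK sK; have bK := loops_ext_min rk_matroid fK.
have [nK | nK] := boolP (None \in K); [right | left]; apply/eqP; rewrite eqEsubset.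
  by rewrite sK subUset sub1set nK.
by rewrite bK andbT -(setU1K (none_notin_imset loops)) subsetD1 sK.
Qed.

Lemma interval_atom_some y : 1 < r F -> y \in F -> y \notin loops ->
  interval_atom E Fe (Some @: cl r (y |: loops)).
Proof.
move=> rF yF yn.
have yP : Some y \in Some @: cl r (y |: loops).
  by rewrite mem_imset_some (subsetP (sub_cl _ _)) ?setU11.
rewrite /interval_atom (bot_flat_ext MC_proper); split.
- exact: flat_ext_some (flat_cl rk_matroid (S := y |: loops)) (atom_notin_cut rF yn).
- by apply: subset_trans (subsetUr _ _); rewrite imsetS // atom_sub_flat.
- by apply: contraTneq yP => ->; rewrite mem_imset_some.
move=> K fK sK; have [[G eK] | [G eK]] := option_set_cases K; last first.
  by have := subsetP sK None; rewrite eK setU11 (negbTE (none_notin_imset _)) => /(_ isT).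
have := flat_ext_restrict rk_matroid fK; have := restrict_someS sK.
rewrite eK !restrict_some_imset => sG fG.
by case: (flat_sub_atom rk_matroid yn fG sG) => ->; [left | right].
Qed.

Lemma Fe_atom_cover (u : option T) :
  u \in Fe -> u \in bot_flat E \/ exists2 Q, interval_atom E Fe Q & u \in Q.
Proof.
rewrite (bot_flat_ext MC_proper) => uFe.
have [rF | rF] := leqP (r F) 1; first by right; exists Fe => //; apply: interval_atom_Fe.
case: u uFe => [y | _]; last first.
  by right; exists (None |: Some @: loops); [apply: interval_atom_none_loops | rewrite setU11].
rewrite !inE mem_imset_some => yF.
have [yl | yn] := boolP (y \in loops); first by left; rewrite mem_imset_some.
right; exists (Some @: cl r (y |: loops)); first exact: interval_atom_some.
by rewrite mem_imset_some (subsetP (sub_cl _ _)) ?setU11.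
Qed.

End MinimalFlat.

Theorem lemma2p19 (T : finType) (r : {set T} -> nat) (MC : {set {set T}})
    (F : {set T}) :
  is_matroid_rank r ->
  proper_modular_cut r MC ->
  minimal_in MC F ->
  irreducible_flat (ext_rank r MC) (None |: (Some @: F)).
Proof.
move=> rk_matroid MC_proper F_minimal.
apply: (irreducible_flat_of_atom_cover (p := None)).
- rewrite (bot_flat_ext MC_proper).
  exact: flat_ext_some (flat_cl rk_matroid (S := set0)) (loops_notin_cut MC_proper).
- by move=> K fK; rewrite (bot_flat_ext MC_proper) (loops_ext_min rk_matroid fK).
- exact: flat_ext_Fe.
- exact: setU11.
- exact: Fe_coloop.
- exact: Fe_spanned.
- exact: Fe_atom_cover.
Qed.
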